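(* Let $R\ge1$ and let $\mathbb{G}_1,\dots,\mathbb{G}_R$ be linear arrays with central ULAs $\mathbb{U}_{\mathbb{G}_1},\dots,\mathbb{U}_{\mathbb{G}_R}$ of their difference coarrays. Let $\mathbb{M}_r$ be the multi-generator fractal array built from them, $\mathbb{D}_r$ its difference coarray, $\mathbb{U}_r$ the central ULA of $\mathbb{D}_r$, $N=|\mathbb{M}_r|$ (so $N\le\prod_{i=1}^r|\mathbb{G}_i|$), and $P_r=\prod_{i=1}^r|\mathbb{U}_{\mathbb{G}_i}|$. Then for every $1\le r\le R$, $\left[-\tfrac{P_r-1}{2},\tfrac{P_r-1}{2}\right]\cap\mathbb{Z}\subseteq\mathbb{U}_r$, so $|\mathbb{D}_r|\ge|\mathbb{U}_r|\ge P_r$. Consequently, if there is a constant $c>0$ with $|\mathbb{U}_{\mathbb{G}_i}|\ge c|\mathbb{G}_i|^2$ for all $i$, then $|\mathbb{D}_r|\ge c^rN^2$, i.e. $|\mathbb{D}_r|$ is of order $N^2$ for fixed $r$.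
   Context: A linear array is a finite set $\mathbb{G}\subset\mathbb{Z}$ with $\min\mathbb{G}=0$; its difference coarray is $\mathbb{D}=\{n_1-n_2:n_1,n_2\in\mathbb{G}\}$; its central ULA is the largest set $\{-m,\dots,m\}$ ($m\ge0$) contained in $\mathbb{D}$. Given generators $\mathbb{G}_1,\dots,\mathbb{G}_R$ with central ULAs $\mathbb{U}_{\mathbb{G}_i}$, the multi-generator fractal array is defined by $\mathbb{M}_0=\{0\}$ and $\mathbb{M}_{r+1}=\bigcup_{n\in\mathbb{G}_{r+1}}\big(\mathbb{M}_r+n\prod_{i=1}^{r}|\mathbb{U}_{\mathbb{G}_i}|\big)$ for $0\le r\le R-1$ (empty product $=1$), where $A+t=\{a+t:a\in A\}$. *)

(* Finite subsets of Z are represented as seq int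
   (membership = \in, cardinality = size of undup). *)
From HB Require Import structures.
From mathcomp Require Import all_boot all_order all_algebra.
Set Implicit Arguments. Unset Strict Implicit. Unset Printing Implicit Defensive.
Import Order.TTheory GRing.Theory Num.Theory.

Definition card_set (A : seq int) : nat := size (undup A).

Definition linear_array (G : seq int) : bool :=
  (0%R \in G) && all (fun n : int => (0 <= n)%R) G.

Definition coarray (G : seq int) : seq int :=
  undup [seq (n1 - n2)%R | n1 <- G, n2 <- G].

Definition segment (m : nat) : seq int :=
  [seq (i%:Z - m%:Z)%R | i <- iota 0 (2 * m + 1)].

Definition ula_ok (D : seq int) (m : nat) : bool := all (fun j => j \in D) (segment m).

(* radius m of the largest {-m..m} contained in D (a contained segment has at most
   size D elements, so m < size D + 1 is no restriction) *)
Definition ula_rad (D : seq int) : nat := \max_(m < (size D).+1 | ula_ok D m) m.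

Definition central_ula (D : seq int) : seq int := segment (ula_rad D).

(* P_r = prod_{i=1}^r |U_{G_i}|; generator G_{i+1} is Gs i *)
Definition Pprod (Gs : nat -> seq int) (r : nat) : nat :=
  \prod_(i < r) card_set (central_ula (coarray (Gs i))).

Fixpoint fractal (Gs : nat -> seq int) (r : nat) : seq int :=
  match r with
  | 0 => [:: 0%R]
  | r'.+1 => undup (flatten [seq [seq (x + n * (Pprod Gs r')%:Z)%R | x <- fractal Gs r']
                            | n <- Gs r'])
  end.

From HB Require Import structures.
From mathcomp Require Import all_boot all_order all_algebra.
From mathcomp Require Import zify.
Import Order.TTheory GRing.Theory Num.Theory.

(* The product P_r of the central-ULA sizes is odd, and its balanced mixed-radix
   expansion shows that the coarray of M_r contains the segment of radius P_r/2:
   write k = q P_r + s with |s| <= P_r/2 and |q| at most the radius of the central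
   ULA of G_{r+1}; then s = a1 - a2 with a_i in M_r (induction), q = g1 - g2 with
   g_i in G_{r+1}, and k = (a1 + g1 P_r) - (a2 + g2 P_r) with both terms in M_{r+1}.
   Then |U_r| = 2 rad(D_r) + 1 >= P_r, and |M_r| <= prod |G_i| together with
   |U_{G_i}| >= c |G_i|^2 gives c^r |M_r|^2 <= P_r. *)

Lemma mem_segment m (k : int) : (k \in segment m) = (`|k| <= m)%N.
Proof.
apply/mapP/idP => [[i]|km]; first by rewrite mem_iota => ? ->; lia.
by exists `|(k + m%:Z)%R|%N; rewrite ?mem_iota; lia.
Qed.

Lemma uniq_segment m : uniq (segment m).
Proof. by rewrite map_inj_uniq ?iota_uniq // => i j; lia. Qed.

Lemma card_segment m : card_set (segment m) = (2 * m + 1)%N.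
Proof. by rewrite /card_set undup_id ?uniq_segment // size_map size_iota. Qed.

Lemma card_set_allpairs_le (f : int -> int -> int) (s t : seq int) :
  (card_set [seq f x y | x <- s, y <- t] <= card_set s * card_set t)%N.
Proof.
rewrite /card_set -(size_allpairs f); apply: uniq_leq_size; first exact: undup_uniq.
by move=> z; rewrite mem_undup => /allpairsP[[x y] /= [xs yt ->]]; rewrite allpairs_f ?mem_undup.
Qed.

Lemma coarrayP G x :
  reflect (exists a b, [/\ a \in G, b \in G & x = (a - b)%R]) (x \in coarray G).
Proof.
rewrite mem_undup; apply: (iffP allpairsP) => [[[a b] /= hx]|[a [b hx]]].
  by exists a, b.
by exists (a, b).
Qed.

Lemma coarray_sub G a b : a \in G -> b \in G -> (a - b)%R \in coarray G.
Proof. by move=> aG bG; apply/coarrayP; exists a, b. Qed.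

Lemma mem0_coarray G x : x \in G -> 0%R \in coarray G.
Proof. by move=> xG; rewrite -(subrr x) coarray_sub. Qed.

Arguments mem0_coarray {G x}.

Lemma ula_okP D m : reflect (forall k : int, (`|k| <= m)%N -> k \in D) (ula_ok D m).
Proof.
apply: (iffP allP) => [h k km|h k]; first by apply: h; rewrite mem_segment.
by rewrite mem_segment; apply: h.
Qed.

Lemma ula_ok_leq_rad D m : uniq D -> ula_ok D m -> (m <= ula_rad D)%N.
Proof.
move=> uD okm; have m_lt : (m < (size D).+1)%N.
  have := uniq_leq_size (uniq_segment m) (allP okm).
  by rewrite size_map size_iota; lia.
exact: (@leq_bigmax_cond _ (fun i : 'I_(size D).+1 => ula_ok D i) val (Ordinal m_lt)).
Qed.

Lemma ula_ok_rad D : 0%R \in D -> ula_ok D (ula_rad D).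
Proof.
move=> D0; apply: (big_ind (ula_ok D)) => // [|x y okx oky].
  by apply/ula_okP => k k0; have -> : k = 0%R by lia.
by rewrite /maxn; case: ifP.
Qed.

Arguments ula_ok_rad {D}.

Lemma card_central_ula D : card_set (central_ula D) = (2 * ula_rad D + 1)%N.
Proof. exact: card_segment. Qed.

Lemma card_central_ula_le D : 0%R \in D -> (card_set (central_ula D) <= card_set D)%N.
Proof.
move=> D0; rewrite {1}/card_set undup_id ?uniq_segment //.
apply: uniq_leq_size; first exact: uniq_segment.
move=> k; rewrite mem_segment mem_undup.
exact/ula_okP/ula_ok_rad.
Qed.

Lemma PprodS Gs r :
  Pprod Gs r.+1 = (Pprod Gs r * (2 * ula_rad (coarray (Gs r)) + 1))%N.
Proof. by rewrite /Pprod big_ord_recr /= card_central_ula. Qed.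

Lemma odd_Pprod Gs r : odd (Pprod Gs r).
Proof.
elim: r => [|r IH]; first by rewrite /Pprod big_ord0.
by rewrite PprodS oddM IH; lia.
Qed.

Lemma fractalS Gs r :
  fractal Gs r.+1 = undup [seq (x + n * (Pprod Gs r)%:Z)%R | n <- Gs r, x <- fractal Gs r].
Proof. by []. Qed.

Lemma mem_fractalS Gs r n a : n \in Gs r -> a \in fractal Gs r ->
  (a + n * (Pprod Gs r)%:Z)%R \in fractal Gs r.+1.
Proof.
move=> nG aM; rewrite fractalS mem_undup.
exact: (allpairs_f (fun n x => x + n * (Pprod Gs r)%:Z)%R nG aM).
Qed.

Lemma card_fractal_le Gs r :
  (card_set (fractal Gs r) <= \prod_(i < r) card_set (Gs i))%N.
Proof.
elim: r => [|r IH]; first by rewrite big_ord0.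
rewrite fractalS {1}/card_set (undup_id (undup_uniq _)) big_ord_recr /= mulnC.
exact: leq_trans (card_set_allpairs_le _ _ _) (leq_mul (leqnn _) IH).
Qed.

Lemma balanced_divz (k : int) (P m : nat) : odd P ->
  (`|k| <= (P * (2 * m + 1))./2)%N ->
  exists q s : int, [/\ k = (q * P%:Z + s)%R, (`|q| <= m)%N & (`|s| <= P./2)%N].
Proof.
move=> oddP km; have P_gt0 : (0 < P%:Z)%R by lia.
set t := (k + (P./2)%:Z)%R.
have t_eq := divz_eq t P%:Z.
have s_ge0 := modz_ge0 t (lt0r_neq0 P_gt0).
have s_lt := ltz_pmod t P_gt0.
exists (t %/ P%:Z)%Z, ((t %% P%:Z)%Z - (P./2)%:Z)%R; rewrite /t in t_eq s_ge0 s_lt *.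
split; [lia | nia | lia].
Qed.

Arguments balanced_divz {k P m}.

Lemma ula_ok_fractal Gs r : (forall i, (i < r)%N -> 0%R \in Gs i) ->
  ula_ok (coarray (fractal Gs r)) (Pprod Gs r)./2.
Proof.
elim: r => [|r IH] G0; apply/ula_okP => k.
  rewrite /Pprod big_ord0 => k0; have -> : k = 0%R by lia.
  exact: mem0_coarray (mem_head _ _).
rewrite PprodS; set m := ula_rad _ => km.
have [q [s [-> qm sP]]] := balanced_divz (odd_Pprod Gs r) km.
have Gr0 : 0%R \in coarray (Gs r) by apply/mem0_coarray/G0.
have /ula_okP/(_ q qm)/coarrayP[g1 [g2 [g1G g2G ->]]] := ula_ok_rad Gr0.
have /ula_okP/(_ s sP)/coarrayP[a1 [a2 [a1M a2M ->]]] := IH (fun i ir => G0 i (leqW ir)).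
have -> : ((g1 - g2) * (Pprod Gs r)%:Z + (a1 - a2) =
  (a1 + g1 * (Pprod Gs r)%:Z) - (a2 + g2 * (Pprod Gs r)%:Z))%R by lia.
by apply: coarray_sub; apply: mem_fractalS.
Qed.

Arguments ula_ok_fractal {Gs r}.

Lemma ler_scaled_sqr_prod (F : numDomainType) (a b : nat -> nat) (c : F) (n N : nat) :
  (0 <= c)%R -> (N <= \prod_(i < n) a i)%N ->
  (forall i : 'I_n, c * (a i ^ 2)%:R <= (b i)%:R)%R ->
  (c ^+ n * (N ^ 2)%:R <= (\prod_(i < n) b i)%:R)%R.
Proof.
move=> c_ge0 Na cab; rewrite natr_prod.
apply: (@le_trans _ _ (\prod_(i < n) (c * (a i ^ 2)%:R))%R); last first.
  by apply: ler_prod => i _; rewrite mulr_ge0 ?ler0n ?cab.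
rewrite big_split /= prodr_const card_ord ler_wpM2l ?exprn_ge0 //.
by rewrite -natr_prod ler_nat !expnS expn0 !muln1 big_split leq_mul.
Qed.

Arguments ler_scaled_sqr_prod {F} a b {c n N}.

Theorem theorem9 (R : nat) (Gs : nat -> seq int) :
  (1 <= R)%N ->
  (forall i, (i < R)%N -> linear_array (Gs i)) ->
  forall r, (1 <= r <= R)%N ->
    let M := fractal Gs r in
    let D := coarray M in
    let U := central_ula D in
    let N := card_set M in
    let P := Pprod Gs r in
    [/\ (N <= \prod_(i < r) card_set (Gs i))%N,
        (forall k : int, (2 * `|k| <= P - 1)%N -> k \in U),
        (card_set D >= card_set U)%N,
        (card_set U >= P)%N &
        forall (F : realFieldType) (c : F), (0 < c)%R ->
          (forall i, (i < R)%N ->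
             (c * ((card_set (Gs i)) ^ 2)%:R <= (card_set (central_ula (coarray (Gs i))))%:R)%R) ->
          (c ^+ r * (N ^ 2)%:R <= (card_set D)%:R)%R].
Proof.
move=> _ lin r /andP[_ rR] M D U N P.
have G0 i : (i < r)%N -> 0%R \in Gs i.
  by move=> ir; case/andP: (lin i (leq_trans ir rR)).
have D0 : 0%R \in D by have /ula_okP := ula_ok_fractal G0; apply.
have P_rad : (P./2 <= ula_rad D)%N.
  exact: ula_ok_leq_rad (undup_uniq _) (ula_ok_fractal G0).
have oddP := odd_Pprod Gs r.
have UD : (card_set U <= card_set D)%N by apply: card_central_ula_le.
have PU : (P <= card_set U)%N by rewrite card_central_ula; lia.
split=> //; first exact: card_fractal_le.
  by move=> k kP; rewrite mem_segment; lia.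
move=> F c c_gt0 cG.
apply: (@le_trans _ _ (P%:R)%R); last by rewrite ler_nat; lia.
rewrite /P /Pprod.
apply: (ler_scaled_sqr_prod (fun i => card_set (Gs i))
          (fun i => card_set (central_ula (coarray (Gs i)))) (ltW c_gt0)
          (card_fractal_le Gs r)) => i.
exact: cG (leq_trans (ltn_ord i) rR).
Qed.
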